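(* Let $\mathbf{z}=(\mathbf{x},y)$ and $\mathbf{z}'=(\mathbf{x}',y')$ be drawn independently from a distribution $\mathbb{P}$ on $\mathcal{X}\times\{-1,+1\}$, let $p=\Pr(y=1)\in(0,1)$, and let $h(\mathbf{w};\mathbf{x})$ be a scoring function parameterized by $\mathbf{w}\in\mathbb{R}^d$ with $0\le h(\mathbf{w};\mathbf{x})\le 1$. Define $$P(\mathbf{w})=\mathbb{E}_{\mathbf{z},\mathbf{z}'}\left[(1-h(\mathbf{w};\mathbf{x})+h(\mathbf{w};\mathbf{x}'))^2\,\middle\vert\, y=1,y'=-1\right]$$ and, for $\mathbf{w}\in\mathbb{R}^d$, $a,b,\alpha\in\mathbb{R}$, $$F(\mathbf{w},a,b,\alpha;\mathbf{z})=(1-p)(h(\mathbf{w};\mathbf{x})-a)^2\mathbb{I}_{[y=1]}+p(h(\mathbf{w};\mathbf{x})-b)^2\mathbb{I}_{[y=-1]}+2(1+\alpha)\big(p\,h(\mathbf{w};\mathbf{x})\mathbb{I}_{[y=-1]}-(1-p)h(\mathbf{w};\mathbf{x})\mathbb{I}_{[y=1]}\big)-p(1-p)\alpha^2,$$ $f(\mathbf{w},a,b,\alpha)=\mathbb{E}_{\mathbf{z}}[F(\mathbf{w},a,b,\alpha;\mathbf{z})]$. Then the problem $\min_{\mathbf{w}\in\mathbb{R}^d}P(\mathbf{w})$ is equivalent to the saddle-point problem $\min_{\mathbf{w}\in\mathbb{R}^d,(a,b)\in\mathbb{R}^2}\max_{\alpha\in\mathbb{R}} f(\mathbf{w},a,b,\alpha)$,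 in the sense that for every $\mathbf{w}\in\mathbb{R}^d$, $$P(\mathbf{w})=1+\frac{1}{p(1-p)}\min_{(a,b)\in\mathbb{R}^2}\max_{\alpha\in\mathbb{R}}f(\mathbf{w},a,b,\alpha).$$
   Context: $\mathbb{I}_{[\cdot]}$ denotes the indicator function. The expectation conditioned on $y=1,y'=-1$ is over the independent pair $(\mathbf{z},\mathbf{z}')$. *)

From mathcomp Require Import all_boot all_order all_algebra.
From mathcomp Require Import all_classical all_reals all_analysis.
Set Implicit Arguments. Unset Strict Implicit. Unset Printing Implicit Defensive.
Import Order.TTheory GRing.Theory Num.Theory.
Local Open Scope ring_scope.
Local Open Scope classical_set_scope.

(* Labels: [true] stands for y = +1, [false] for y = -1.
   The data distribution is a probability measure [mu] on X * bool. *)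

Section AUC.
Context {dX : measure_display} {X : measurableType dX} {R : realType} {d : nat}.
Variable mu : probability (X * bool)%type R.
Variable h : 'rV[R]_d -> X -> R.

Definition ind (b : bool) : R := if b then 1 else 0.

Definition pos_prob : R := fine (mu [set z | z.2 = true]).

(* Expectation over the independent pair (z, z') drawn from mu x mu,
   conditioned on y = 1, y' = -1:
   E[g | y=1, y'=-1] = E[g 1[y=1] 1[y'=-1]] / (p (1 - p)). *)
Definition cond_pair_exp (g : X -> X -> R) : R :=
  (Rintegral mu setT (fun z => Rintegral mu setT (fun z' =>
      g z.1 z'.1 * ind z.2 * ind (~~ z'.2))))
  / (pos_prob * (1 - pos_prob)).

Definition AUC_P (w : 'rV[R]_d) : R :=
  cond_pair_exp (fun x x' => (1 - h w x + h w x') ^+ 2).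

Definition AUC_F (w : 'rV[R]_d) (a b alpha : R) (z : X * bool) : R :=
  let p := pos_prob in
  (1 - p) * (h w z.1 - a) ^+ 2 * ind z.2
  + p * (h w z.1 - b) ^+ 2 * ind (~~ z.2)
  + 2 * (1 + alpha) * (p * h w z.1 * ind (~~ z.2) - (1 - p) * h w z.1 * ind z.2)
  - p * (1 - p) * alpha ^+ 2.

Definition AUC_f (w : 'rV[R]_d) (a b alpha : R) : R :=
  Rintegral mu setT (AUC_F w a b alpha).

End AUC.

Definition is_max_over {R : realType} (phi : R -> R) (v : R) : Prop :=
  (exists alpha, phi alpha = v) /\ (forall alpha, phi alpha <= v).

From mathcomp Require Import all_boot all_order all_algebra.
From mathcomp Require Import all_classical all_reals all_analysis.
From mathcomp Require Import measurable_realfun ring.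
Import Order.TTheory GRing.Theory Num.Theory.
Local Open Scope ring_scope.
Local Open Scope classical_set_scope.

(* Everything reduces to the class probability p and the first and second
   moments m+, m-, s+, s- of the score on each class: since z and z' are
   independent, P(w) factorizes into these moments, and f(w, a, b, .) is
   the concave quadratic A(a, b) + 2 c alpha - p (1 - p) alpha^2 with
   c = p m- - (1 - p) m+.  Its maximum A(a, b) + c^2 / (p (1 - p)) is a
   convex quadratic in (a, b), minimal at the class-conditional means
   a = m+ / p, b = m- / (1 - p); at that point the identity is a field
   computation. *)

Section bounded_measurable.
Context {d : measure_display} {T : measurableType d} {R : realType}.

Definition bounded_measurable (f : T -> R) :=
  measurable_fun setT f /\ exists M, forall x, `|f x| <= M.

Lemma bounded_measurable_cst c : bounded_measurable (fun=> c).
Proof. by split => //; exists `|c|. Qed.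

Lemma bounded_measurableD f g : bounded_measurable f -> bounded_measurable g ->
  bounded_measurable (fun x => f x + g x).
Proof.
move=> [mf [M fM]] [mg [N gN]]; split; first exact: measurable_funD.
by exists (M + N) => x; rewrite (le_trans (ler_normD _ _)) ?lerD.
Qed.

Lemma bounded_measurableM f g : bounded_measurable f -> bounded_measurable g ->
  bounded_measurable (fun x => f x * g x).
Proof.
move=> [mf [M fM]] [mg [N gN]]; split; first exact: measurable_funM.
by exists (M * N) => x; rewrite normrM ler_pM.
Qed.

Lemma bounded_measurable_integrable (mu : {finite_measure set T -> \bar R}) f :
  bounded_measurable f -> mu.-integrable setT (EFin \o f).
Proof.
move=> [mf [M fM]].
apply: (@le_integrable _ _ _ mu setT _ _ (EFin \o cst M)) => //.
- exact/measurable_EFinP.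
- by move=> x _ /=; rewrite !lee_fin (le_trans (fM x)) ?ler_norm.
- exact: finite_measure_integrable_cst.
Qed.

Lemma Rintegral_cst_probability (P : probability T R) c :
  Rintegral P setT (fun=> c) = c.
Proof. by rewrite Rintegral_cst // (congr1 fine (probability_setT P)) mulr1. Qed.

End bounded_measurable.

Ltac solve_bounded_measurable :=
  repeat first [ assumption | exact: bounded_measurable_cst
    | apply: bounded_measurableD | apply: bounded_measurableM ].

Ltac expand_Rintegral :=
  rewrite !RintegralD ?RintegralZl //;
  try (apply: bounded_measurable_integrable; solve_bounded_measurable).

Section labels.
Context {dX : measure_display} {X : measurableType dX} {R : realType}.
Variable mu : probability (X * bool)%type R.

Lemma bounded_measurable_ind_pos :
  bounded_measurable (fun z : X * bool => ind z.2 : R).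
Proof.
split; first exact: measurableT_comp.
by exists 1 => -[x []]; rewrite /ind ?normr1 ?normr0.
Qed.

Lemma bounded_measurable_ind_neg :
  bounded_measurable (fun z : X * bool => ind (~~ z.2) : R).
Proof.
split; first by do 2 apply: measurableT_comp => //.
by exists 1 => -[x []]; rewrite /ind ?normr1 ?normr0.
Qed.

Lemma Rintegral_ind_pos : Rintegral mu setT (fun z => ind z.2) = pos_prob mu.
Proof.
have mpos : measurable [set z : X * bool | z.2 = true].
  by rewrite -[X in measurable X]setTI; exact: (measurable_snd _ [set true]).
rewrite /Rintegral (eq_integral (fun z => (\1_[set z | z.2 = true] z)%:E)).
  by rewrite integral_indic ?setIT.
by move=> [x []] _; rewrite /ind indicE; [rewrite mem_set | rewrite memNset].
Qed.

Lemma Rintegral_ind_neg :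
  Rintegral mu setT (fun z => ind (~~ z.2)) = 1 - pos_prob mu.
Proof.
rewrite (@eq_Rintegral _ _ _ mu setT (fun z => 1 + (-1) * ind z.2)); last first.
  by move=> [x []] _; rewrite /ind /=; ring.
have ind_pos_bm := bounded_measurable_ind_pos.
expand_Rintegral.
by rewrite (Rintegral_cst_probability mu) Rintegral_ind_pos mulN1r.
Qed.

End labels.

Lemma is_max_over_concave_quadratic (R : realType) (u c k : R) : 0 < k ->
  is_max_over (fun t => u + 2 * c * t - k * t ^+ 2) (u + c ^+ 2 / k).
Proof.
move=> k_gt0; have k_neq0 : k != 0 by rewrite gt_eqF.
split; first by exists (c / k); field.
move=> t; rewrite -subr_ge0.
have -> : u + c ^+ 2 / k - (u + 2 * c * t - k * t ^+ 2) = (c - k * t) ^+ 2 / k.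
  by field.
by rewrite divr_ge0 ?sqr_ge0 ?ltW.
Qed.

Lemma convex_quadratic_min (R : realFieldType) (k m t : R) : 0 < k ->
  k * (m / k) ^+ 2 - 2 * m * (m / k) <= k * t ^+ 2 - 2 * m * t.
Proof.
move=> k_gt0; have k_neq0 : k != 0 by rewrite gt_eqF.
rewrite -subr_ge0.
have -> : k * t ^+ 2 - 2 * m * t - (k * (m / k) ^+ 2 - 2 * m * (m / k))
    = k * (t - m / k) ^+ 2 by field.
by rewrite mulr_ge0 ?sqr_ge0 ?ltW.
Qed.

Section moments.
Context {dX : measure_display} {X : measurableType dX} {R : realType} {d : nat}.
Variables (mu : probability (X * bool)%type R) (h : 'rV[R]_d -> X -> R).
Variable w : 'rV[R]_d.
Hypothesis hw_meas : measurable_fun setT (h w).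
Hypothesis hw_bounded : exists M, forall x, `|h w x| <= M.

Let p := pos_prob mu.

Definition pos_moment (k : nat) : R :=
  Rintegral mu setT (fun z => h w z.1 ^+ k * ind z.2).
Definition neg_moment (k : nat) : R :=
  Rintegral mu setT (fun z => h w z.1 ^+ k * ind (~~ z.2)).

Definition pos_mean : R := pos_moment 1 / p.
Definition neg_mean : R := neg_moment 1 / (1 - p).

Definition score_gap : R := p * neg_moment 1 - (1 - p) * pos_moment 1.

Definition AUC_base (a b : R) : R :=
  (1 - p) * pos_moment 2 + p * neg_moment 2
  + (1 - p) * (p * a ^+ 2 - 2 * pos_moment 1 * a)
  + p * ((1 - p) * b ^+ 2 - 2 * neg_moment 1 * b) + 2 * score_gap.

Definition AUC_inner_max (a b : R) : R :=
  AUC_base a b + score_gap ^+ 2 / (p * (1 - p)).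

Let score_bm : bounded_measurable (fun z : X * bool => h w z.1).
Proof.
split; first exact: measurableT_comp hw_meas measurable_fst.
by have [M hM] := hw_bounded; exists M => z.
Qed.

Let ind_pos_bm := @bounded_measurable_ind_pos _ X R.
Let ind_neg_bm := @bounded_measurable_ind_neg _ X R.

Lemma AUC_f_moments a b alpha :
  AUC_f mu h w a b alpha =
  AUC_base a b + 2 * score_gap * alpha - p * (1 - p) * alpha ^+ 2.
Proof.
(* The exponents [^+ 1] keep the summands syntactically of the form [pos_moment 1]. *)
rewrite /AUC_f (@eq_Rintegral _ _ _ mu setT (fun z =>
     (1 - p) * (h w z.1 ^+ 2 * ind z.2) + (-2 * a * (1 - p)) * (h w z.1 ^+ 1 * ind z.2)
     + (a ^+ 2 * (1 - p)) * ind z.2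
     + p * (h w z.1 ^+ 2 * ind (~~ z.2)) + (-2 * b * p) * (h w z.1 ^+ 1 * ind (~~ z.2))
     + (b ^+ 2 * p) * ind (~~ z.2)
     + (2 * (1 + alpha) * p) * (h w z.1 ^+ 1 * ind (~~ z.2))
     + (- 2 * (1 + alpha) * (1 - p)) * (h w z.1 ^+ 1 * ind z.2)
     + (fun=> - (p * (1 - p) * alpha ^+ 2)) z)); last first.
  by move=> z _; rewrite /AUC_F /= -/p; ring.
expand_Rintegral.
rewrite Rintegral_cst_probability Rintegral_ind_pos Rintegral_ind_neg -/p.
rewrite /AUC_base /score_gap /pos_moment /neg_moment; ring.
Qed.

Lemma AUC_P_moments : AUC_P mu h w =
  ((1 - p + 2 * neg_moment 1 + neg_moment 2) * p
   - 2 * (1 - p + neg_moment 1) * pos_moment 1 + (1 - p) * pos_moment 2) / (p * (1 - p)).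
Proof.
rewrite /AUC_P /cond_pair_exp -/p; congr (_ / _).
have inner z : Rintegral mu setT (fun z' =>
    (1 - h w z.1 + h w z'.1) ^+ 2 * ind z.2 * ind (~~ z'.2)) =
  ((1 - h w z.1) ^+ 2 * ind z.2) * (1 - p)
  + (2 * (1 - h w z.1) * ind z.2) * neg_moment 1 + ind z.2 * neg_moment 2.
  rewrite (@eq_Rintegral _ _ _ mu setT (fun z' =>
     ((1 - h w z.1) ^+ 2 * ind z.2) * ind (~~ z'.2)
     + (2 * (1 - h w z.1) * ind z.2) * (h w z'.1 ^+ 1 * ind (~~ z'.2))
     + ind z.2 * (h w z'.1 ^+ 2 * ind (~~ z'.2)))); last by move=> z' _; ring.
  by expand_Rintegral; rewrite Rintegral_ind_neg.
rewrite (@eq_Rintegral _ _ _ mu setT (fun z =>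
     (1 - p + 2 * neg_moment 1 + neg_moment 2) * ind z.2
     + (-2 * (1 - p + neg_moment 1)) * (h w z.1 ^+ 1 * ind z.2)
     + (1 - p) * (h w z.1 ^+ 2 * ind z.2))); last first.
  by move=> z _; rewrite inner; ring.
expand_Rintegral.
by rewrite Rintegral_ind_pos -/p -/(pos_moment 1) -/(pos_moment 2); ring.
Qed.

Hypothesis p_range : 0 < p < 1.

Let pq_gt0 : 0 < p * (1 - p).
Proof. by have /andP[p_gt0 p_lt1] := p_range; rewrite mulr_gt0 ?subr_gt0. Qed.

Lemma AUC_f_max a b :
  is_max_over (fun alpha => AUC_f mu h w a b alpha) (AUC_inner_max a b).
Proof.
have -> : (fun alpha => AUC_f mu h w a b alpha) =
    (fun t => AUC_base a b + 2 * score_gap * t - p * (1 - p) * t ^+ 2).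
  by apply/funext => alpha; exact: AUC_f_moments.
exact: is_max_over_concave_quadratic.
Qed.

Lemma AUC_inner_max_min a b : AUC_inner_max pos_mean neg_mean <= AUC_inner_max a b.
Proof.
have /andP[p_gt0 p_lt1] := p_range.
have q_gt0 : 0 < 1 - p by rewrite subr_gt0.
have [p_ge0 q_ge0] := (ltW p_gt0, ltW q_gt0).
by rewrite lerD2r /AUC_base lerD2r lerD ?lerD2l ?ler_wpM2l ?convex_quadratic_min.
Qed.

Lemma AUC_P_inner_max :
  AUC_P mu h w = 1 + (p * (1 - p))^-1 * AUC_inner_max pos_mean neg_mean.
Proof.
have /andP[p_gt0 p_lt1] := p_range.
have p_neq0 : p != 0 by rewrite gt_eqF.
have q_neq0 : 1 - p != 0 by rewrite gt_eqF ?subr_gt0.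
rewrite AUC_P_moments /AUC_inner_max /AUC_base /score_gap /pos_mean /neg_mean -/p.
by field; apply/andP.
Qed.

End moments.

Theorem proposition1 (dX : measure_display) (X : measurableType dX)
  (R : realType) (d : nat) (mu : probability (X * bool)%type R)
  (h : 'rV[R]_d -> X -> R)
  (h_meas : forall w, measurable_fun setT (h w))
  (h_range : forall w x, 0 <= h w x <= 1)
  (p_range : 0 < pos_prob mu < 1) :
  forall w : 'rV[R]_d,
    exists g : R -> R -> R,
      (forall a b, is_max_over (fun alpha => AUC_f mu h w a b alpha) (g a b)) /\
      exists a0 b0 : R,
        (forall a b, g a0 b0 <= g a b) /\
        AUC_P mu h w = 1 + (pos_prob mu * (1 - pos_prob mu))^-1 * g a0 b0.
Proof.
move=> w.
have hw_bounded : exists M, forall x, `|h w x| <= M.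
  by exists 1 => x; have /andP[h_ge0 h_le1] := h_range w x; rewrite ger0_norm.
exists (AUC_inner_max mu h w); split; first exact: AUC_f_max.
exists (pos_mean mu h w), (neg_mean mu h w); split.
- exact: AUC_inner_max_min.
- exact: AUC_P_inner_max.
Qed.
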